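(* Let $K\subseteq\mathbb R^d$ be a compact set satisfying LMI($1$). For every $k\in\mathbb N$ there is $C_k>0$ such that for all $\varepsilon\in(0,1)$, $x\in\partial K$, $r>0$ and every polynomial $P$ of degree at most $k$, \[\sum_{|\alpha|=k}\frac{|\partial^\alpha P(0)|}{\alpha!}\le\frac{C_k}{r^k}\sup\{|P(y)|:y\in A_{x,\varepsilon},\ |y|\le r\}.\]
   Context: $A_{x,\varepsilon}=\varepsilon^{-1}(K-x)\cup\{y\in\mathbb R^d:|y|\ge\varepsilon^{-1}\}$. $K$ satisfies LMI($1$) if there are $\varepsilon_0>0$ and constants $c_k\ge1$ such that for every $k$, every polynomial $P$ of degree $\le k$, every $\varepsilon\in(0,\varepsilon_0)$ and every $x_0\in K$: $|\nabla P(x_0)|\le c_k\varepsilon^{-1}\sup\{|P(y)|:y\in B(x_0,\varepsilon)\cap K\}$ ($B$ the closed ball). *)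

From HB Require Import structures.
From mathcomp Require Import all_boot all_order all_algebra.
From mathcomp Require Import all_classical all_reals all_analysis.
From mathcomp Require mpoly.
Set Implicit Arguments. Unset Strict Implicit. Unset Printing Implicit Defensive.
Import Order.TTheory GRing.Theory Num.Theory.
Import numFieldNormedType.Exports.
Local Open Scope classical_set_scope.
Local Open Scope ring_scope.

Section Defs.
Variables (R : realType) (d : nat).

Definition enorm (y : 'rV[R]_d) : R := Num.sqrt (\sum_(i < d) y 0 i ^+ 2).

Definition cball (x : 'rV[R]_d) (e : R) : set 'rV[R]_d :=
  [set y | enorm (y - x) <= e].

Definition peval (P : mpoly.mpoly d R) (y : 'rV[R]_d) : R :=
  mpoly.meval (fun i => y 0 i) P.

(* total degree of P is at most k (the zero polynomial has every degree bound) *)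
Definition deg_le (P : mpoly.mpoly d R) (k : nat) : Prop :=
  (\max_(m <- mpoly.msupp P) (mpoly.mdeg m).+1 <= k.+1)%N.

Definition grad_norm (P : mpoly.mpoly d R) (x : 'rV[R]_d) : R :=
  Num.sqrt (\sum_(i < d) (peval (mpoly.mderiv i P) x) ^+ 2).

Definition pderiv (a : mpoly.multinom d) (P : mpoly.mpoly d R) : mpoly.mpoly d R :=
  mpoly.mderivm a P.

Definition mfact (a : mpoly.multinom d) : nat := (\prod_(i < d) (mpoly.fun_of_multinom a i)`!)%N.

Definition mnm_of (k : nat) (f : {ffun 'I_d -> 'I_k}) : mpoly.multinom d :=
  mpoly.Multinom [tuple nat_of_ord (f i) | i < d].

Definition LMI1 (K : set 'rV[R]_d) : Prop :=
  exists eps0 : R, 0 < eps0 /\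
  exists c : nat -> R, (forall k, 1 <= c k) /\
  forall (k : nat) (P : mpoly.mpoly d R), deg_le P k ->
  forall eps : R, 0 < eps -> eps < eps0 ->
  forall x0, K x0 ->
    grad_norm P x0 <= c k * eps^-1 *
      sup [set `|peval P y| | y in cball x0 eps `&` K].

Definition Aset (K : set 'rV[R]_d) (x : 'rV[R]_d) (eps : R) : set 'rV[R]_d :=
  [set eps^-1 *: (z - x) | z in K] `|` [set y | eps^-1 <= enorm y].

Definition bdry (K : set 'rV[R]_d) : set 'rV[R]_d := closure K `\` interior K.

End Defs.

(* Since [P] has degree at most [k], the derivatives [d^a P (0) / a!] with [|a| = k] are its
   top coefficients [P_a], so it suffices to bound [|P_a| r^k] by [C S], where [S] is the
   supremum of [|P|] over [A_{x,eps}] intersected with the ball [B(0,r)].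

   If [r >= 2/eps], the mixed forward difference of order [a] and step [h = r/2k] based at
   [r/2 e_i] (with [a_i > 0]) equals [a! h^k P_a]; all its nodes lie in [B(0,r)] but outside
   [B(0,1/eps)], hence in [A_{x,eps}], and its coefficients are at most [k!^d].

   If [r < 2/eps], apply LMI(1) [k] times to [Q(z) = P(eps^-1 (z - x))], whose derivative
   [d^a Q] is the constant [a! eps^-k P_a], on balls of radius [delta = eps r / M] centred at
   points of [K] near [x]: the iterated neighbourhood [B(x, k delta) \cap K] lies in
   [B(x, eps r)], which [z |-> eps^-1 (z - x)] maps into [A_{x,eps} \cap B(0,r)].

   Compactness of [K] only serves to get [x \in K] from [x \in bdry K]. *)

From mathcomp Require Import all_boot all_order all_algebra.
From mathcomp Require Import mpoly.
From mathcomp Require Import all_classical all_reals all_analysis.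
From mathcomp Require Import ring lra.
Import Order.TTheory GRing.Theory Num.Theory.
Import numFieldNormedType.Exports.
Local Open Scope classical_set_scope.
Local Open Scope ring_scope.
Set Implicit Arguments. Unset Strict Implicit. Unset Printing Implicit Defensive.

Section EuclideanNorm.
Variables (R : realType) (d : nat).
Implicit Types (x y z : 'rV[R]_d).

Lemma sumr_sqr_ge0 (a : 'I_d -> R) : 0 <= \sum_i a i ^+ 2.
Proof. by apply: sumr_ge0 => i _; rewrite sqr_ge0. Qed.

Lemma normr_le_sqrt_sumr_sqr (a : 'I_d -> R) i :
  `|a i| <= Num.sqrt (\sum_j a j ^+ 2).
Proof.
rewrite -sqrtr_sqr ler_sqrt ?sumr_sqr_ge0 // (bigD1 i) //= lerDl.
by apply: sumr_ge0 => j _; rewrite sqr_ge0.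
Qed.

Lemma enorm_ge0 y : 0 <= enorm y.
Proof. exact: sqrtr_ge0. Qed.

Lemma enorm_sqr y : enorm y ^+ 2 = \sum_i y 0 i ^+ 2.
Proof. by rewrite /enorm sqr_sqrtr // sumr_sqr_ge0. Qed.

Lemma enorm_coord y i : `|y 0 i| <= enorm y.
Proof. exact: normr_le_sqrt_sumr_sqr. Qed.

Lemma enorm0 : enorm (0 : 'rV[R]_d) = 0.
Proof. by rewrite /enorm big1 ?sqrtr0 // => i _; rewrite mxE expr0n. Qed.

Lemma enormZ (c : R) y : enorm (c *: y) = `|c| * enorm y.
Proof.
rewrite /enorm (eq_bigr (fun i => c ^+ 2 * y 0 i ^+ 2)); last first.
  by move=> i _; rewrite mxE exprMn.
by rewrite -mulr_sumr sqrtrM ?sqr_ge0 // sqrtr_sqr.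
Qed.

Lemma cauchy_schwarz (a b : 'I_d -> R) :
  (\sum_i a i * b i) ^+ 2 <= (\sum_i a i ^+ 2) * (\sum_i b i ^+ 2).
Proof.
(* Lagrange's identity: the gap is half the sum of the squares (a_i b_j - a_j b_i)^2 *)
have lagrange : \sum_i \sum_j (a i * b j - a j * b i) ^+ 2 =
    \sum_i \sum_j a i ^+ 2 * b j ^+ 2 + \sum_i \sum_j b i ^+ 2 * a j ^+ 2
    - 2 * \sum_i \sum_j (a i * b i) * (a j * b j).
  rewrite mulr_sumr -big_split -sumrB; apply: eq_bigr => i _.
  rewrite mulr_sumr -big_split -sumrB; apply: eq_bigr => j _ /=; ring.
rewrite -!big_distrlr /= -expr2 in lagrange.
rewrite -subr_ge0 -(pmulr_rge0 _ (ltr0Sn R 1)) mulrBr mulr2n mulrDl mul1r.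
rewrite [X in _ + X - _]mulrC -lagrange.
by apply: sumr_ge0 => i _; apply: sumr_ge0 => j _; rewrite sqr_ge0.
Qed.

Lemma ler_enormD y z : enorm (y + z) <= enorm y + enorm z.
Proof.
rewrite -(ler_pXn2r (isT : (0 < 2)%N)) ?nnegrE ?addr_ge0 ?enorm_ge0 //.
rewrite enorm_sqr (eq_bigr (fun i => y 0 i ^+ 2 + z 0 i ^+ 2 + 2 * (y 0 i * z 0 i)));
  last by move=> i _; rewrite mxE; ring.
rewrite !big_split /= -mulr_sumr -!enorm_sqr sqrrD.
have : \sum_i y 0 i * z 0 i <= enorm y * enorm z.
  apply: le_trans (ler_norm _) _.
  rewrite -(ler_pXn2r (isT : (0 < 2)%N)) ?nnegrE ?mulr_ge0 ?enorm_ge0 //.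
  by rewrite real_normK ?num_real // exprMn !enorm_sqr cauchy_schwarz.
lra.
Qed.

Lemma enorm_le_sum_norm y : enorm y <= \sum_i `|y 0 i|.
Proof.
rewrite -(ler_pXn2r (isT : (0 < 2)%N)) ?nnegrE ?enorm_ge0 ?sumr_ge0 //.
rewrite enorm_sqr expr2 mulr_suml; apply: ler_sum => i _; rewrite mulr_sumr.
rewrite (bigD1 i) //= -expr2 real_normK ?num_real // lerDl.
by apply: sumr_ge0 => j _; rewrite mulr_ge0.
Qed.

Lemma cball_center x (e : R) : 0 <= e -> cball x e x.
Proof. by move=> e_ge0; rewrite /cball /= subrr enorm0. Qed.

Lemma cball_trans x y z (s t : R) : cball x s y -> cball y t z -> cball x (t + s) z.
Proof.
rewrite /cball /= => xy yz; have -> : z - x = (z - y) + (y - x) by rewrite addrA subrK.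
by apply: le_trans (ler_enormD _ _) _; rewrite lerD.
Qed.

Lemma cball_coord x y (e : R) i : cball x e y -> `|y 0 i| <= enorm x + e.
Proof.
move=> xy; rewrite -[y](subrK x) mxE.
apply: le_trans (ler_normD _ _) _; rewrite addrC lerD ?enorm_coord //.
exact: le_trans (enorm_coord _ _) xy.
Qed.

End EuclideanNorm.

Section Degree.
Variables (R : realType) (d : nat).
Implicit Types (p q : {mpoly R[d]}) (m : 'X_{1..d}).

Lemma deg_leE p k : deg_le p k = (msize p <= k.+1)%N.
Proof. by rewrite /deg_le msizeE. Qed.

Lemma deg_leP p k : deg_le p k <-> forall m, (k < mdeg m)%N -> p@_m = 0.
Proof.
rewrite deg_leE; split=> [p_le m km | p_coef].
  by apply: memN_msupp_eq0; apply: msize_mdeg_ge; apply: leq_trans p_le km.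
rewrite msizeE; apply/bigmax_leqP_seq => m m_supp _.
rewrite ltnS leqNgt; apply/negP => /p_coef pm0.
by move: m_supp; rewrite mcoeff_msupp pm0 eqxx.
Qed.

Lemma mdeg_le_of_msupp p k m : deg_le p k -> m \in msupp p -> (mdeg m <= k)%N.
Proof. by rewrite deg_leE => p_le /msize_mdeg_lt m_lt; apply: leq_trans m_lt p_le. Qed.

Lemma deg_le0 k : deg_le (0 : {mpoly R[d]}) k.
Proof. by rewrite deg_leE msize0. Qed.

Lemma deg_le_mono p a b : deg_le p a -> (a <= b)%N -> deg_le p b.
Proof. by rewrite !deg_leE => p_le ab; apply: leq_trans p_le _. Qed.

Lemma deg_leC (c : R) : deg_le (c%:MP : {mpoly R[d]}) 0.
Proof. by rewrite deg_leE msizeC; case: (c != 0). Qed.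

Lemma deg_leXU i : deg_le ('X_i : {mpoly R[d]}) 1.
Proof. by rewrite deg_leE msizeX mdeg1. Qed.

Lemma deg_leD p q k : deg_le p k -> deg_le q k -> deg_le (p + q) k.
Proof.
rewrite !deg_leE => p_le q_le.
by apply: leq_trans (msizeD_le _ _) _; rewrite geq_max p_le.
Qed.

Lemma deg_leN p k : deg_le p k -> deg_le (- p) k.
Proof. by rewrite !deg_leE msizeN. Qed.

Lemma deg_leZ (c : R) p k : deg_le p k -> deg_le (c *: p) k.
Proof. by rewrite !deg_leE => /(leq_trans (msizeZ_le _ _)). Qed.

Lemma deg_le_sum (I : eqType) (r : seq I) (F : I -> {mpoly R[d]}) k :
  (forall i, i \in r -> deg_le (F i) k) -> deg_le (\sum_(i <- r) F i) k.
Proof.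
elim: r => [_|i r IH F_le]; first by rewrite big_nil; apply: deg_le0.
rewrite big_cons; apply: deg_leD; first by apply: F_le; rewrite mem_head.
by apply: IH => j j_r; apply: F_le; rewrite in_cons j_r orbT.
Qed.

Lemma deg_leM p q a b : deg_le p a -> deg_le q b -> deg_le (p * q) (a + b).
Proof.
have [->|p0] := eqVneq p 0; first by rewrite mul0r => _ _; apply: deg_le0.
have [->|q0] := eqVneq q 0; first by rewrite mulr0 => _ _; apply: deg_le0.
rewrite !deg_leE msizeM // => p_le q_le.
by rewrite -subn1 leq_subLR add1n -addnS -addSn leq_add.
Qed.

Lemma deg_le_prod (I : Type) (r : seq I) (F : I -> {mpoly R[d]}) (deg : I -> nat) :
  (forall i, deg_le (F i) (deg i)) -> deg_le (\prod_(i <- r) F i) (\sum_(i <- r) deg i).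
Proof.
move=> F_le; elim: r => [|i r IH]; last by rewrite !big_cons; apply: deg_leM.
by rewrite !big_nil -mpolyC1; apply: deg_leC.
Qed.

Lemma deg_leX p a n : deg_le p a -> deg_le (p ^+ n) (n * a).
Proof.
move=> p_le; elim: n => [|n IH]; first by rewrite expr0 -mpolyC1; apply: deg_leC.
by rewrite exprS mulSn; apply: deg_leM.
Qed.

Lemma deg_le_comp_mpoly p (lq : d.-tuple {mpoly R[d]}) k :
  deg_le p k -> (forall i, deg_le (tnth lq i) 1) -> deg_le (p \mPo lq) k.
Proof.
move=> p_le lq_le; rewrite comp_mpolyEX; apply: deg_le_sum => m m_supp.
apply: deg_leZ; rewrite comp_mpolyX.
apply: deg_le_mono (deg_le_prod _ (fun i => deg_leX (m i) (lq_le i))) _.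
by rewrite (eq_bigr (fun i => m i)) -?mdegE ?(mdeg_le_of_msupp p_le) // => i _; rewrite muln1.
Qed.

Lemma deg_le_mderiv i p k : deg_le p k -> deg_le (mderiv i p) k.
Proof.
rewrite !deg_leP => p_coef m km; rewrite mcoeff_mderiv p_coef ?mul0rn //.
by rewrite mdegD mdeg1 addn1 ltnS ltnW.
Qed.

Lemma mderivm_top p (a : 'X_{1..d}) :
  deg_le p (mdeg a) -> p^`M[a] = (p@_a *+ mfact a)%:MP.
Proof.
move=> p_le; have : deg_le (p^`M[a]) 0.
  move/deg_leP: p_le => p_coef; apply/deg_leP => m m_gt0.
  by rewrite mcoeff_mderivm p_coef ?mul0rn // mdegD -[X in (X < _)%N]addn0 ltn_add2l.
rewrite deg_leE => /msize1_polyC ->; rewrite mcoeff_mderivm addm0.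
by congr (_ *+ _)%:MP; apply: eq_bigr => i _; rewrite ffactnn.
Qed.

End Degree.

Section ForwardDifference.
Variable R : realType.
Implicit Types (f : nat -> R).

Definition fdiff (a : nat) f : R :=
  \sum_(j < a.+1) (-1) ^+ (a - j) * 'C(a, j)%:R * f j.

Lemma fdiff_sum (I : Type) (r : seq I) (F : I -> nat -> R) a :
  fdiff a (fun j => \sum_(t <- r) F t j) = \sum_(t <- r) fdiff a (F t).
Proof.
by rewrite /fdiff exchange_big; apply: eq_bigr => j _; rewrite mulr_sumr.
Qed.

Lemma fdiffZ (c : R) f a : fdiff a (fun j => c * f j) = c * fdiff a f.
Proof. by rewrite /fdiff mulr_sumr; apply: eq_bigr => j _; ring. Qed.

Lemma fdiff_const (c : R) a : fdiff a.+1 (fun=> c) = 0.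
Proof.
rewrite -[c]mulr1 fdiffZ.
suff -> : fdiff a.+1 (fun=> 1) = (-1 + 1) ^+ a.+1 by rewrite addNr expr0n mulr0.
rewrite /fdiff exprDn; apply: eq_bigr => j _.
by rewrite expr1n !mulr1 mulr_natr.
Qed.

(* [j * 'C(a.+1, j) = a.+1 * 'C(a, j.-1)] *)
Lemma fdiffS_mul f a :
  fdiff a.+1 (fun j => j%:R * f j) = a.+1%:R * fdiff a (fun j => f j.+1).
Proof.
rewrite /fdiff big_ord_recl mul0r mulr0 add0r mulr_sumr.
apply: eq_bigr => j _; rewrite lift0 subSS.
have bin_diag : (j.+1 * 'C(a.+1, j.+1))%:R = (a.+1 * 'C(a, j))%:R :> R.
  by rewrite -mul_bin_diag.
rewrite !natrM in bin_diag.
transitivity ((-1) ^+ (a - j) * (j.+1%:R * 'C(a.+1, j.+1)%:R) * f j.+1); first ring.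
by rewrite bin_diag; ring.
Qed.

Lemma fdiff_exp a l : (l <= a)%N ->
  fdiff a (fun j => j%:R ^+ l) = (l == a)%:R * a`!%:R.
Proof.
elim: a l => [|a IH] [|l] //= l_le.
- by rewrite /fdiff big_ord1 !expr0 bin0 fact0 !mulr1.
- by rewrite mul0r -(fdiff_const 1 a); congr fdiff.
- under eq_fun do rewrite exprS.
  rewrite fdiffS_mul; under eq_fun => j do
    [rewrite -[_.+1]addn1 natrD exprD1n; under eq_bigr => t _ do rewrite -mulr_natl].
  rewrite fdiff_sum big_ord_recr /= big1 ?add0r => [|t _]; last first.
    rewrite fdiffZ IH ?(leq_trans (ltnW (ltn_ord t))) //.
    by rewrite eqn_leq (leqNgt a) (leq_trans (ltn_ord t)) ?andbF ?mul0r ?mulr0.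
  rewrite fdiffZ binn mul1r IH // eqSS factS natrM.
  by case: (l == a); rewrite ?mul0r ?mulr0 ?mul1r // mulrA.
Qed.

Lemma fdiff_affine_exp a n (w h : R) : (n <= a)%N ->
  fdiff a (fun j => (w + h * j%:R) ^+ n) = (n == a)%:R * a`!%:R * h ^+ a.
Proof.
move=> n_le; under eq_fun => j do
  [rewrite exprDn; under eq_bigr => l _ do rewrite exprMn -mulr_natl !mulrA].
rewrite fdiff_sum big_ord_recr /= big1 ?add0r => [|t _]; last first.
  rewrite fdiffZ fdiff_exp ?(leq_trans (ltnW (ltn_ord t))) //.
  by rewrite eqn_leq (leqNgt a) (leq_trans (ltn_ord t)) ?andbF ?mul0r ?mulr0.
rewrite fdiffZ fdiff_exp // binn subnn expr0 !mul1r.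
by case: eqP => [->|_]; rewrite ?mul0r ?mulr0 // mulrC.
Qed.

Lemma fdiff_widen (b a : nat) f : (a <= b)%N ->
  \sum_(j < b.+1) (-1) ^+ (a - j) * 'C(a, j)%:R * f j = fdiff a f.
Proof.
move=> a_le; rewrite /fdiff
  (@big_ord_widen _ _ _ a.+1 b.+1 (fun j => (-1) ^+ (a - j) * 'C(a, j)%:R * f j)) //.
rewrite [RHS]big_mkcond /=; apply: eq_bigr => j _.
by case: ltnP => // a_lt; rewrite bin_small // mulr0 mul0r.
Qed.

End ForwardDifference.

Lemma bin_le_fact n m : ('C(n, m) <= n`!)%N.
Proof.
have [m_le|m_gt] := leqP m n; last by rewrite bin_small.
by rewrite -(bin_fact m_le) leq_pmulr // muln_gt0 !fact_gt0.
Qed.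

Section Multinomials.
Variable d : nat.
Implicit Types (a m : 'X_{1..d}).

Lemma mdeg_coord_le a i : (a i <= mdeg a)%N.
Proof. by rewrite mdegE (bigD1 i) //= leq_addr. Qed.

Lemma exists_coord_lt m a : (mdeg m <= mdeg a)%N -> m != a -> exists i, (m i < a i)%N.
Proof.
move=> deg_le m_neq_a; apply/existsP; apply: contraR m_neq_a.
rewrite negb_exists => /forallP a_le_m; apply/eqP.
have /submK m_eq : (a <= m)%MM by apply/mnm_lepP => i; rewrite leqNgt a_le_m.
have : mdeg (m - a) = 0%N.
  by apply/eqP; rewrite -leqn0 -(leq_add2r (mdeg a)) -mdegD m_eq.
by move/eqP; rewrite mdeg_eq0 => /eqP mBa0; rewrite -m_eq mBa0 add0m.
Qed.

Lemma mfact_gt0 a : (0 < mfact a)%N.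
Proof. by apply: prodn_gt0 => i; apply: fact_gt0. Qed.

End Multinomials.

Section GridDifference.
Variables (R : realType) (d k : nat).
Implicit Types (Q : {mpoly R[d]}) (a m : 'X_{1..d}) (g : {ffun 'I_d -> 'I_k.+1}).

Definition grid_point g : 'rV[R]_d := \row_i (g i : nat)%:R.

Definition grid_coef a g : R := \prod_i ((-1) ^+ (a i - g i) * 'C(a i, g i)%:R).

Definition grid_diff Q a (w : 'rV[R]_d) (h : R) : R :=
  \sum_g grid_coef a g * peval Q (w + h *: grid_point g).

Lemma grid_diff_expand Q a w h : (forall i, (a i <= k)%N) ->
  grid_diff Q a w h = \sum_(m <- msupp Q)
    Q@_m * \prod_i fdiff (a i) (fun j => (w 0 i + h * j%:R) ^+ m i).
Proof.
move=> a_le; rewrite /grid_diff.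
under eq_bigr => g _ do rewrite /peval mevalE mulr_sumr.
rewrite exchange_big /=; apply: eq_bigr => m _.
transitivity (Q@_m * \prod_i \sum_(j < k.+1)
    (-1) ^+ (a i - j) * 'C(a i, j)%:R * (w 0 i + h * (j : nat)%:R) ^+ m i); last first.
  congr (_ * _); apply: eq_bigr => i _.
  exact: (fdiff_widen (fun j => (w 0 i + h * j%:R) ^+ m i) (a_le i)).
rewrite bigA_distr_bigA mulr_sumr; apply: eq_bigr => g _ /=.
rewrite /grid_coef mulrCA -big_split /=; congr (_ * _).
by apply: eq_bigr => i _; rewrite !mxE.
Qed.

Lemma grid_diff_top Q a w h : deg_le Q k -> mdeg a = k ->
  grid_diff Q a w h = Q@_a * (mfact a)%:R * h ^+ k.
Proof.
move=> Q_le a_deg; have a_le i : (a i <= k)%N by rewrite -a_deg mdeg_coord_le.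
set top := Q@_a * _ * _; rewrite grid_diff_expand //.
have term m : m \in msupp Q ->
    Q@_m * \prod_i fdiff (a i) (fun j => (w 0 i + h * j%:R) ^+ m i) = (m == a)%:R * top.
  move=> m_supp; have [->|m_neq_a] := eqVneq m a.
    under eq_bigr => i _ do rewrite fdiff_affine_exp // eqxx mul1r.
    by rewrite big_split /= -natr_prod -expr_sum -mdegE a_deg mul1r mulrA.
  have m_deg : (mdeg m <= mdeg a)%N by rewrite a_deg (mdeg_le_of_msupp Q_le m_supp).
  have [i m_lt] := exists_coord_lt m_deg m_neq_a.
  by rewrite (bigD1 i) //= fdiff_affine_exp ?(ltnW m_lt) // (ltn_eqF m_lt) !mul0r mulr0.
rewrite (eq_big_seq _ term); have [a_supp|a_supp] := boolP (a \in msupp Q).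
  rewrite (bigD1_seq a) ?msupp_uniq //= eqxx mul1r big1 ?addr0 // => m /negbTE ->.
  by rewrite mul0r.
rewrite big1_seq /top ?(memN_msupp_eq0 a_supp) ?mul0r // => m /= m_supp.
suff -> : (m == a) = false by rewrite mul0r.
by apply: contraNF a_supp => /eqP <-.
Qed.

Lemma grid_coef_eq0 a g i : (a i < g i)%N -> grid_coef a g = 0.
Proof. by move=> a_lt; rewrite /grid_coef (bigD1 i) //= bin_small // mulr0 mul0r. Qed.

Lemma norm_grid_coef_le a g : (forall i, (a i <= k)%N) -> `|grid_coef a g| <= (k`! ^ d)%:R.
Proof.
move=> a_le; rewrite normr_prod natrX -[X in _ ^+ X]card_ord -prodr_const.
apply: ler_prod => i _; rewrite normr_ge0 normrM normrX normrN1 expr1n mul1r normr_nat.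
by rewrite ler_nat (leq_trans (bin_le_fact _ _)) // leq_fact.
Qed.

Lemma norm_grid_diff_le Q a w h (M : R) : (forall i, (a i <= k)%N) -> 0 <= M ->
  (forall g, (forall i, (g i <= a i)%N) -> `|peval Q (w + h *: grid_point g)| <= M) ->
  `|grid_diff Q a w h| <= (k.+1 ^ d * k`! ^ d)%:R * M.
Proof.
move=> a_le M_ge0 Q_le; apply: le_trans (ler_norm_sum _ _ _) _.
apply: le_trans (_ : _ <= \sum_(g : {ffun 'I_d -> 'I_k.+1}) (k`! ^ d)%:R * M) _; last first.
  by rewrite sumr_const card_ffun !card_ord natrM -[in leRHS]mulrA [in leRHS]mulr_natl.
apply: ler_sum => g _; rewrite normrM.
have [g_le|] := boolP [forall i, g i <= a i]%N.
  by apply: ler_pM => //; [exact: norm_grid_coef_le | exact/Q_le/forallP].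
rewrite negb_forall => /existsP [i]; rewrite -ltnNge => /grid_coef_eq0 ->.
by rewrite normr0 mul0r mulr_ge0.
Qed.

End GridDifference.

Section Rescale.
Variables (R : realType) (d : nat).
Implicit Types (P : {mpoly R[d]}) (x z : 'rV[R]_d).

Definition rescale_mpoly (c : R) x P : {mpoly R[d]} :=
  P \mPo [tuple c *: ('X_i - (x 0 i)%:MP) | i < d].

Lemma peval_rescale c x P z : peval (rescale_mpoly c x P) z = peval P (c *: (z - x)).
Proof.
rewrite /peval /rescale_mpoly comp_mpoly_meval; apply: meval_eq => i.
by rewrite tnth_mktuple mevalZ mevalB mevalXU mevalC !mxE.
Qed.

Lemma deg_le_rescale c x P k : deg_le P k -> deg_le (rescale_mpoly c x P) k.
Proof.
move=> P_le; apply: deg_le_comp_mpoly => // i; rewrite tnth_mktuple.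
apply/deg_leZ/deg_leD; first exact: deg_leXU.
exact/deg_leN/(deg_le_mono (deg_leC _ _)).
Qed.

Lemma mcoeff_rescale_top c x P (a : 'X_{1..d}) : deg_le P (mdeg a) ->
  (rescale_mpoly c x P)@_a = c ^+ mdeg a * P@_a.
Proof.
move=> P_le; have shift :
    grid_diff (mdeg a) (rescale_mpoly c x P) a x 1 = grid_diff (mdeg a) P a 0 c.
  by apply: eq_bigr => g _; rewrite peval_rescale scale1r add0r addrAC subrr add0r.
have := grid_diff_top x 1 (deg_le_rescale c x P_le) (erefl (mdeg a)).
rewrite shift grid_diff_top // expr1n mulr1 mulrAC => /mulIf <- //; first by rewrite mulrC.
by rewrite pnatr_eq0 -lt0n mfact_gt0.
Qed.

End Rescale.

Section Sup.
Variable R : realType.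

Lemma le_sup_image (T : Type) (E : set T) (f : T -> R) y :
  has_ubound (f @` E) -> E y -> f y <= sup (f @` E).
Proof. by move=> E_ub Ey; apply: ub_le_sup => //; exists y. Qed.

Lemma sup_image_le (T : Type) (E : set T) (f : T -> R) y0 (M : R) :
  E y0 -> (forall y, E y -> f y <= M) -> sup (f @` E) <= M.
Proof.
move=> Ey0 f_le; apply: ge_sup; first by exists (f y0), y0.
by move=> _ [y Ey <-]; apply: f_le.
Qed.

Lemma le_sup_image_subset (T : Type) (E F : set T) (f : T -> R) y0 :
  E `<=` F -> E y0 -> has_ubound (f @` F) -> sup (f @` E) <= sup (f @` F).
Proof.
move=> EF Ey0 F_ub; apply: sup_le => [_ [y Ey <-]| |].
- by exists (f y); split => //; exists y => //; apply: EF.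
- by exists (f y0), y0.
- by split => //; exists (f y0), y0 => //; apply: EF.
Qed.

End Sup.

Section PolynomialBounds.
Variables (R : realType) (d : nat).
Implicit Types (P : {mpoly R[d]}) (A : set 'rV[R]_d).

Lemma peval_bounded P (B : R) :
  exists M, forall y : 'rV[R]_d, (forall i, `|y 0 i| <= B) -> `|peval P y| <= M.
Proof.
exists (\sum_(m <- msupp P) `|P@_m| * \prod_i `|B| ^+ (m i)) => y y_le.
rewrite /peval mevalE; apply: le_trans (ler_norm_sum _ _ _) _.
apply: ler_sum => m _; rewrite normrM normr_prod ler_wpM2l //.
apply: ler_prod => i _; rewrite normrX exprn_ge0 //=.
by apply: lerXn2r; rewrite ?nnegrE // (le_trans (y_le i)) // ler_norm.
Qed.

Lemma has_ubound_peval_cball P x (e : R) A :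
  has_ubound [set `|peval P y| | y in cball x e `&` A].
Proof.
have [M P_le] := peval_bounded P (enorm x + e).
by exists M => _ [y [xy _] <-]; apply: P_le => i; apply: cball_coord xy.
Qed.

Lemma has_ubound_peval_enorm_le P (r : R) A :
  has_ubound [set `|peval P y| | y in A `&` [set y | enorm y <= r]].
Proof.
have [M P_le] := peval_bounded P r.
by exists M => _ [y [_ y_le] <-]; apply: P_le => i; apply: le_trans (enorm_coord _ _) y_le.
Qed.

End PolynomialBounds.

Section IteratedMarkov.
Variables (R : realType) (d : nat) (K : set 'rV[R]_d) (eps0 : R) (c : nat -> R).
Hypothesis c_ge1 : forall k, 1 <= c k.
Hypothesis markov : forall (k : nat) (P : {mpoly R[d]}), deg_le P k ->
  forall eps : R, 0 < eps -> eps < eps0 ->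
  forall x0, K x0 ->
    grad_norm P x0 <= c k * eps^-1 * sup [set `|peval P y| | y in cball x0 eps `&` K].

Lemma norm_foldr_mderiv_le k (delta : R) (Q : {mpoly R[d]}) (s : seq 'I_d) z :
  0 < delta -> delta < eps0 -> deg_le Q k -> K z ->
  `|peval (foldr (@mderiv d R) Q s) z| <=
    (c k / delta) ^+ size s * sup [set `|peval Q u| | u in cball z ((size s)%:R * delta) `&` K].
Proof.
move=> delta_gt0 delta_lt Q_le; have cd_ge0 : 0 <= c k / delta.
  by rewrite divr_ge0 ?(ltW delta_gt0) // (le_trans ler01 (c_ge1 k)).
elim: s z => [|i s IH] z Kz.
  rewrite expr0 mul1r; apply: (le_sup_image (has_ubound_peval_cball _ _ _ _)).
  by split => //; apply: cball_center; rewrite mul0r.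
rewrite /=; set Q' := foldr _ Q s.
have Q'_le : deg_le Q' k.
  by rewrite /Q'; elim: (s) => [|j t IHt]; [exact: Q_le | exact: deg_le_mderiv].
apply: le_trans (normr_le_sqrt_sumr_sqr (fun j => peval (mderiv j Q') z) i) _.
apply: le_trans (markov Q'_le delta_gt0 delta_lt Kz) _.
rewrite exprS -[leRHS]mulrA ler_wpM2l //.
apply: (sup_image_le (y0 := z)); first by split => //; apply/cball_center/ltW.
move=> y [zy Ky]; apply: le_trans (IH y Ky) _; rewrite ler_wpM2l ?exprn_ge0 //.
apply: (le_sup_image_subset (y0 := y)); last exact: has_ubound_peval_cball.
  move=> u [yu Ku]; split => //; move: (cball_trans zy yu).
  by rewrite /cball /= -natr1 mulrDl mul1r.
by split => //; apply/cball_center/mulr_ge0/ltW.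
Qed.

Lemma norm_mderivm_le k (delta : R) (Q : {mpoly R[d]}) (a : 'X_{1..d}) z :
  0 < delta -> delta < eps0 -> deg_le Q k -> K z ->
  `|peval (Q^`M[a]) z| <=
    (c k / delta) ^+ mdeg a * sup [set `|peval Q u| | u in cball z ((mdeg a)%:R * delta) `&` K].
Proof.
have size_s : size (flatten [seq nseq (a i) i | i <- enum 'I_d]) = mdeg a.
  rewrite size_flatten /shape sumnE !big_map -enumT big_enum mdegE /=.
  by apply: eq_bigr => i _; rewrite size_nseq.
by rewrite mderivm_foldr -size_s; apply: norm_foldr_mderiv_le.
Qed.

End IteratedMarkov.

Section CoefficientBound.
Variables (R : realType) (d : nat) (K : set 'rV[R]_d) (eps0 : R) (c : nat -> R).
Hypotheses (eps0_gt0 : 0 < eps0) (c_ge1 : forall k, 1 <= c k).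
Hypothesis markov : forall (k : nat) (P : {mpoly R[d]}), deg_le P k ->
  forall eps : R, 0 < eps -> eps < eps0 ->
  forall x0, K x0 ->
    grad_norm P x0 <= c k * eps^-1 * sup [set `|peval P y| | y in cball x0 eps `&` K].

Definition coef_const (k : nat) : R :=
  (k.+1 ^ d * k`! ^ d)%:R * (2 * k%:R) ^+ k + (c k * (k%:R + 4 / eps0)) ^+ k.

Lemma coef_const_ge_far k : (k.+1 ^ d * k`! ^ d)%:R * (2 * k%:R) ^+ k <= coef_const k.
Proof.
rewrite lerDl exprn_ge0 // mulr_ge0 ?addr_ge0 ?divr_ge0 ?(ltW eps0_gt0) //.
exact: le_trans ler01 (c_ge1 k).
Qed.

Lemma coef_const_ge_near k : (c k * (k%:R + 4 / eps0)) ^+ k <= coef_const k.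
Proof. by rewrite lerDr mulr_ge0 ?exprn_ge0 // mulr_ge0. Qed.

Lemma coef_const_gt0 k : 0 < coef_const k.
Proof.
apply: lt_le_trans (coef_const_ge_near k); apply/exprn_gt0/mulr_gt0.
  exact: lt_le_trans ltr01 (c_ge1 k).
by apply: ltr_wpDl; rewrite ?divr_gt0.
Qed.

Variables (k : nat) (eps : R) (x : 'rV[R]_d) (r : R) (P : {mpoly R[d]}).
Hypotheses (eps_gt0 : 0 < eps) (Kx : K x) (r_gt0 : 0 < r) (P_le : deg_le P k).

Let S := sup [set `|peval P y| | y in Aset K x eps `&` [set y | enorm y <= r]].

Let Aset_ball y := Aset K x eps y /\ enorm y <= r.

Lemma norm_peval_le_sup y : Aset_ball y -> `|peval P y| <= S.
Proof. by move=> [Ay y_le]; apply: (le_sup_image (has_ubound_peval_enorm_le _ _ _)). Qed.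

Lemma Aset_ball0 : Aset_ball 0.
Proof. by split; [left; exists x; rewrite ?subrr ?scaler0 | rewrite enorm0 ltW]. Qed.

Lemma sup_Aset_ge0 : 0 <= S.
Proof. exact: le_trans (normr_ge0 _) (norm_peval_le_sup Aset_ball0). Qed.

Lemma coef_le_const (a : 'X_{1..d}) : k = 0%N -> `|P@_a| <= S.
Proof.
move=> k0; have := P_le; rewrite k0 deg_leE => /msize1_polyC P_const.
apply: le_trans (norm_peval_le_sup Aset_ball0).
rewrite P_const /peval mevalC mcoeffC normrM.
by rewrite ler_piMr // normr_nat; case: eqP.
Qed.

Lemma coef_le_grid (a : 'X_{1..d}) w (h : R) : mdeg a = k ->
  (forall g : {ffun 'I_d -> 'I_k.+1}, (forall i, (g i <= a i)%N) ->
    Aset_ball (w + h *: grid_point R g)) ->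
  `|P@_a| * `|h| ^+ k <= (k.+1 ^ d * k`! ^ d)%:R * S.
Proof.
move=> a_deg grid_in; have a_le i : (a i <= k)%N by rewrite -a_deg mdeg_coord_le.
have := norm_grid_diff_le a_le sup_Aset_ge0
  (fun g g_le => norm_peval_le_sup (grid_in g g_le)).
rewrite grid_diff_top // !normrM normrX normr_nat; apply: le_trans.
by rewrite mulrAC ler_peMr ?mulr_ge0 ?exprn_ge0 // ler1n mfact_gt0.
Qed.

(* The grid with corner [r/2 e_i0] and step [r/2k] lies in [B(0,r)] but outside
   [B(0,1/eps)]. *)
Lemma coef_le_far (a : 'X_{1..d}) : mdeg a = k -> (0 < k)%N -> 2 / eps <= r ->
  `|P@_a| * r ^+ k <= (k.+1 ^ d * k`! ^ d)%:R * (2 * k%:R) ^+ k * S.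
Proof.
move=> a_deg k_gt0 r_ge.
have [i0 a_i0] : exists i0, ((0%MM : 'X_{1..d}) i0 < a i0)%N.
  by apply: exists_coord_lt; rewrite ?mdeg0 // eq_sym -mdeg_eq0 a_deg -lt0n.
rewrite mnm0E in a_i0.
have k_pos : 0 < k%:R :> R by rewrite ltr0n.
set h := r / (2 * k%:R); set w := (r / 2) *: (delta_mx 0 i0 : 'rV[R]_d).
have h_gt0 : 0 < h by rewrite divr_gt0 ?mulr_gt0.
have hk : h * k%:R = r / 2 by rewrite /h; field; rewrite gt_eqF.
have grid_in (g : {ffun 'I_d -> 'I_k.+1}) :
    (forall i, (g i <= a i)%N) -> Aset_ball (w + h *: grid_point R g).
  move=> g_le; set y := w + h *: _.
  have y_coord j : y 0 j = r / 2 * (j == i0)%:R + h * (g j)%:R.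
    by rewrite !mxE eqxx eq_sym.
  have y_ge0 j : 0 <= y 0 j.
    by rewrite y_coord addr_ge0 // mulr_ge0 ?ler0n ?divr_ge0 // ltW.
  split; [right => /= | ].
    apply: le_trans (enorm_coord _ i0); rewrite ger0_norm // y_coord eqxx mulr1.
    have : 0 <= h * (g i0)%:R by rewrite mulr_ge0 ?ler0n // ltW.
    lra.
  apply: le_trans (enorm_le_sum_norm _) _.
  under eq_bigr => j _ do rewrite ger0_norm // y_coord.
  rewrite big_split /= -!mulr_sumr (bigD1 i0) //= eqxx big1 ?addr0 ?mulr1 => [|j /negbTE ->//].
  have : \sum_j (g j : nat)%:R <= k%:R :> R.
    have sum_g : (\sum_j (g j : nat) <= mdeg a)%N.
      by rewrite mdegE; apply: leq_sum => j _; apply: g_le.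
    by rewrite -natr_sum ler_nat (leq_trans sum_g) ?a_deg.
  by rewrite -(ler_pM2l h_gt0) hk; lra.
have := coef_le_grid a_deg grid_in; rewrite [`|h|]gtr0_norm // => coef_le.
have -> : r ^+ k = (2 * k%:R) ^+ k * h ^+ k.
  by rewrite -exprMn mulrC /h divfK ?mulf_neq0 ?gt_eqF.
by rewrite mulrCA [leRHS]mulrAC [leRHS]mulrC ler_wpM2l // exprn_ge0 // mulr_ge0.
Qed.

(* Iterate the Markov inequality for [P (eps^-1 (z - x))] on balls of radius
   [eps r / M] around [x]. *)
Lemma coef_le_near (a : 'X_{1..d}) : mdeg a = k -> r < 2 / eps ->
  `|P@_a| * r ^+ k <= (c k * (k%:R + 4 / eps0)) ^+ k * S.
Proof.
move=> a_deg r_lt; have c_gt0 : 0 < c k := lt_le_trans ltr01 (c_ge1 k).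
set M := k%:R + 4 / eps0; set delta := eps * r / M.
have M4 : 4 / eps0 <= M by rewrite lerDr.
have M_gt0 : 0 < M by apply: lt_le_trans M4; rewrite divr_gt0.
have delta_gt0 : 0 < delta by rewrite !divr_gt0 ?mulr_gt0.
have er_lt : eps * r < 2 by rewrite mulrC -ltr_pdivlMr.
have delta_lt : delta < eps0.
  rewrite /delta ltr_pdivrMr // (lt_le_trans er_lt) //.
  have : eps0 * (4 / eps0) = 4 by rewrite mulrC divfK ?gt_eqF.
  have : eps0 * (4 / eps0) <= eps0 * M by rewrite ler_pM2l.
  lra.
have k_delta : k%:R * delta <= eps * r.
  rewrite /delta mulrCA ler_piMr ?mulr_ge0 ?(ltW eps_gt0) ?(ltW r_gt0) //.
  by rewrite ler_pdivrMr // mul1r lerDl divr_ge0 // ltW.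
have Q_le := deg_le_rescale eps^-1 x P_le.
have := norm_mderivm_le c_ge1 markov a delta_gt0 delta_lt Q_le Kx.
rewrite mderivm_top ?a_deg // {1}/peval mevalC mcoeff_rescale_top ?a_deg //.
have sup_le : sup [set `|peval (rescale_mpoly eps^-1 x P) u|
                     | u in cball x (k%:R * delta) `&` K] <= S.
  apply: (sup_image_le (y0 := x)); first by split => //; apply/cball_center/mulr_ge0/ltW.
  move=> u [xu Ku]; rewrite peval_rescale; apply: norm_peval_le_sup.
  split; first by left; exists u.
  rewrite enormZ gtr0_norm ?invr_gt0 // ler_pdivrMl //.
  exact: le_trans xu k_delta.
have cd_ge0 : 0 <= c k / delta by rewrite divr_ge0 ?ltW.
move/le_trans/(_ (ler_wpM2l (exprn_ge0 _ cd_ge0) sup_le)) => coef_le.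
have er_gt0 : 0 < eps * r by rewrite mulr_gt0.
apply: le_trans (_ : _ <= `|eps^-1 ^+ k * P@_a *+ mfact a| * (eps * r) ^+ k) _.
  rewrite -mulr_natr !normrM normr_nat normrX gtr0_norm ?invr_gt0 //.
  have -> : eps^-1 ^+ k * `|P@_a| * (mfact a)%:R * (eps * r) ^+ k =
      `|P@_a| * r ^+ k * (mfact a)%:R.
    by rewrite exprMn exprVn; field; rewrite expf_neq0 ?gt_eqF.
  by rewrite ler_peMr ?ler1n ?mfact_gt0 // mulr_ge0 // exprn_ge0 // ltW.
apply: le_trans (ler_wpM2r (exprn_ge0 _ (ltW er_gt0)) coef_le) _.
rewrite mulrAC -exprMn /delta; apply: ler_wpM2r; first exact: sup_Aset_ge0.
by rewrite le_eqVlt; apply/orP; left; apply/eqP; congr (_ ^+ _); field; rewrite ?gt_eqF.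
Qed.

Lemma coef_le (a : 'X_{1..d}) : mdeg a = k -> `|P@_a| * r ^+ k <= coef_const k * S.
Proof.
move=> a_deg; have [k0|k_gt0] := posnP k.
  rewrite k0 expr0 mulr1; apply: le_trans (coef_le_const a k0) _.
  rewrite ler_peMl ?sup_Aset_ge0 //; apply: le_trans (coef_const_ge_far 0).
  by rewrite !expr0 mulr1 !exp1n.
have [r_lt|r_ge] := ltP r (2 / eps).
  apply: le_trans (coef_le_near a_deg r_lt) _.
  by rewrite ler_wpM2r ?sup_Aset_ge0 ?coef_const_ge_near.
apply: le_trans (coef_le_far a_deg k_gt0 r_ge) _.
by rewrite ler_wpM2r ?sup_Aset_ge0 ?coef_const_ge_far.
Qed.

End CoefficientBound.

Lemma norm_pderiv0 (R : realType) (d : nat) (P : {mpoly R[d]}) (a : 'X_{1..d}) :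
  deg_le P (mdeg a) -> `|peval (pderiv a P) 0| / (mfact a)%:R = `|P@_a|.
Proof.
move=> P_le; rewrite /pderiv /peval mderivm_top // mevalC normrMn.
rewrite -[`|_| *+ _]mulr_natr mulfK //.
by rewrite pnatr_eq0 -lt0n mfact_gt0.
Qed.

Lemma mdeg_mnm_of (d k : nat) (f : {ffun 'I_d -> 'I_k}) :
  mdeg (mnm_of f) = (\sum_(i < d) (f i : nat))%N.
Proof. by rewrite mdegE; apply: eq_bigr => i _; rewrite /mnm_of multinomE tnth_mktuple. Qed.

Theorem lemma7 (R : realType) (d : nat) (K : set 'rV[R]_d) :
  compact K -> LMI1 K ->
  forall k : nat, exists Ck : R, 0 < Ck /\
  forall (eps : R), 0 < eps -> eps < 1 ->
  forall x, bdry K x ->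
  forall r : R, 0 < r ->
  forall P : mpoly.mpoly d R, deg_le P k ->
    \sum_(f : {ffun 'I_d -> 'I_k.+1} | (\sum_(i < d) (f i : nat))%N == k)
        `|peval (pderiv (mnm_of f) P) 0| / (mfact (mnm_of f))%:R
      <= Ck / r ^+ k *
         sup [set `|peval P y| | y in Aset K x eps `&` [set y | enorm y <= r]].
Proof.
move=> K_compact [eps0 [eps0_gt0 [c [c_ge1 markov]]]] k.
have C_gt0 := coef_const_gt0 d eps0_gt0 c_ge1 k.
exists ((k.+1 ^ d)%:R * coef_const d eps0 c k).
split; first by rewrite mulr_gt0 ?ltr0n ?expn_gt0.
move=> eps eps_gt0 _ x [x_clK _] r r_gt0 P P_le.
have K_closed : closed K by apply: compact_closed K_compact; apply: norm_hausdorff.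
have Kx : K x by move: x_clK; rewrite -(closure_id K).1.
set S := sup _; have S_ge0 : 0 <= S := sup_Aset_ge0 eps P Kx r_gt0.
have r_gt0k : 0 < r ^+ k by apply: exprn_gt0.
have term (f : {ffun 'I_d -> 'I_k.+1}) : (\sum_(i < d) (f i : nat))%N == k ->
    `|peval (pderiv (mnm_of f) P) 0| / (mfact (mnm_of f))%:R
      <= coef_const d eps0 c k * S / r ^+ k.
  rewrite -mdeg_mnm_of => /eqP a_deg; rewrite norm_pderiv0 ?a_deg // ler_pdivlMr //.
  have := coef_le eps0_gt0 c_ge1 markov eps_gt0 Kx r_gt0 P_le a_deg.
  by rewrite /S.
apply: le_trans (ler_sum _ term) _; rewrite big_mkcond /=.
apply: le_trans (_ : _ <= \sum_(f : {ffun 'I_d -> 'I_k.+1}) coef_const d eps0 c k * S / r ^+ k) _.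
  apply: ler_sum => f _; case: ifP => // _.
  by rewrite divr_ge0 ?mulr_ge0 ?(ltW C_gt0) ?(ltW r_gt0k).
by rewrite sumr_const card_ffun !card_ord -[in X in X <= _]mulr_natl !mulrA mulrAC.
Qed.
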